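(* Let $X$ be a real vector space. Then $(X,\tau_c)$ has the Heine–Borel property: every $\tau_c$-closed and $\tau_c$-bounded subset of $X$ is $\tau_c$-compact. Moreover, every $\tau_c$-compact subset of $X$ lies in some finite-dimensional subspace of $X$.
   Context: For $A\subseteq X$, $cor(A):=\{x\in A:\ \forall x'\in X\ \exists \lambda'>0 \text{ with } x+\lambda x'\in A\ \forall\lambda\in[0,\lambda']\}$. The core convex topology $\tau_c$ on $X$ is the topology whose open sets are the unions of families of convex sets $B\subseteq X$ with $cor(B)=B$; it makes $X$ a topological vector space. A set $A$ is $\tau_c$-bounded if for every $\tau_c$-neighborhood $U$ of $0$ there is $s>0$ with $A\subseteq tU$ for all $t>s$. *)

From HB Require Import structures.
From mathcomp Require Import all_boot all_order all_algebra.
From mathcomp Require Import all_classical reals.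
Set Implicit Arguments. Unset Strict Implicit. Unset Printing Implicit Defensive.
Import Order.TTheory GRing.Theory Num.Theory.
Local Open Scope classical_set_scope.
Local Open Scope ring_scope.

Section CoreTopology.
Variables (R : realType) (X : lmodType R).

Definition cor (A : set X) : set X :=
  [set x | A x /\ forall x' : X, exists2 l' : R, 0 < l' &
     forall l : R, 0 <= l <= l' -> A (x + l *: x')].

Definition convex_set_X (B : set X) : Prop :=
  forall x y, B x -> B y -> forall l : R, 0 <= l <= 1 -> B (l *: x + (1 - l) *: y).

Definition tauc_open (O : set X) : Prop :=
  exists F : set (set X),
    (forall B, F B -> convex_set_X B /\ cor B = B) /\ O = \bigcup_(B in F) B.

Definition tauc_closed (A : set X) : Prop := tauc_open (~` A).

Definition tauc_nbhs0 (U : set X) : Prop :=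
  exists O, tauc_open O /\ O 0 /\ O `<=` U.

Definition tauc_bounded (A : set X) : Prop :=
  forall U, tauc_nbhs0 U -> exists2 s : R, 0 < s &
    forall t : R, s < t -> A `<=` [set t *: u | u in U].

Definition tauc_compact (A : set X) : Prop :=
  forall F : set (set X), (forall U, F U -> tauc_open U) ->
    A `<=` \bigcup_(U in F) U ->
    exists G : set (set X), [/\ G `<=` F, finite_set G & A `<=` \bigcup_(U in G) U].

Definition span_seq (s : seq X) : set X :=
  [set x | exists c : 'I_(size s) -> R, x = \sum_(i < size s) c i *: s`_i].

Definition subspace_X (V : set X) : Prop :=
  [/\ V 0, forall x y, V x -> V y -> V (x + y) & forall (a : R) x, V x -> V (a *: x)].

Definition fin_dim_subspace (V : set X) : Prop :=
  subspace_X V /\ exists s : seq X, V = span_seq s.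

End CoreTopology.

(* Every linear functional f is tau_c-continuous: {x | |f x| < c} is convex and
   equal to its core.  Hence tau_c-bounded and tau_c-compact sets are bounded
   under every linear functional.  Such a set A lies in a finite-dimensional
   subspace: otherwise A contains a_0, a_1, ..., each outside the span of the
   previous ones, and by Zorn's lemma a_k |-> k extends to a linear functional
   unbounded on A.  Conversely, for t_1, ..., t_n the map c |-> sum_i c_i t_i
   from R^n is tau_c-continuous, since a core point of a convex set absorbs
   small multiples of finitely many directions and their average.  A
   tau_c-closed, tau_c-bounded A has bounded coordinates on its finite span, so
   it is a closed subset of the image of a compact box. *)

From HB Require Import structures.
From mathcomp Require Import all_boot all_order all_algebra.
From mathcomp Require Import all_classical reals all_analysis.
From mathcomp Require Import lra finmap.
Set Implicit Arguments. Unset Strict Implicit. Unset Printing Implicit Defensive.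
Import Order.TTheory GRing.Theory Num.Theory.
Import numFieldNormedType.Exports.
Local Open Scope classical_set_scope.
Local Open Scope ring_scope.

Section Spans.
Variables (R : realType) (X : lmodType R).
Implicit Types (s : seq X) (x a : X).

Lemma span_seq_subspace s : subspace_X (span_seq s).
Proof.
split.
- by exists (fun=> 0); rewrite big1 // => i _; rewrite scale0r.
- move=> _ _ [c ->] [d ->]; exists (fun i => c i + d i).
  by rewrite -big_split; apply: eq_bigr => i _; rewrite scalerDl.
- move=> k _ [c ->]; exists (fun i => k * c i).
  by rewrite scaler_sumr; apply: eq_bigr => i _; rewrite scalerA.
Qed.

Lemma span_seq_nil a : span_seq [::] a -> a = 0.
Proof. by move=> [c ->]; rewrite big_ord0. Qed.

Lemma span_seq_consP x s a :
  span_seq (x :: s) a <-> exists k w, span_seq s w /\ a = k *: x + w.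
Proof.
split=> [[c ->]|[k [_ [[c ->] ->]]]].
  rewrite big_ord_recl; exists (c ord0), (\sum_i c (lift ord0 i) *: s`_i).
  by split=> //; exists (fun i => c (lift ord0 i)).
exists (fun i : 'I_(size s).+1 => if unlift ord0 i is Some j then c j else k).
by rewrite big_ord_recl unlift_none; congr (_ + _); apply: eq_bigr => i _; rewrite liftK.
Qed.

Lemma span_seq_cons_head x s : span_seq (x :: s) x.
Proof.
apply/span_seq_consP; exists 1, 0; split; last by rewrite scale1r addr0.
by case: (span_seq_subspace s).
Qed.

Lemma span_seq_cons_subset x s : span_seq s `<=` span_seq (x :: s).
Proof. by move=> a sa; apply/span_seq_consP; exists 0, a; rewrite scale0r add0r. Qed.

End Spans.

Section LinearFunctionals.
Variables (R : realType) (X : lmodType R).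
Implicit Types (G : set (X * R)) (f : X -> R) (x : X).

Definition linear_functional f :=
  (forall x y, f (x + y) = f x + f y) /\ (forall k x, f (k *: x) = k * f x).

Lemma linear_functional0 f : linear_functional f -> f 0 = 0.
Proof. by move=> [_ fZ]; rewrite -(scale0r 0) fZ mul0r. Qed.

Definition graph_subspace G := [/\ G (0, 0),
  forall p q, G p -> G q -> G (p.1 + q.1, p.2 + q.2) &
  forall k p, G p -> G (k *: p.1, k * p.2)].

(* A subspace of [X * R] is the graph of a linear map from its projection
   on [X] exactly when it meets [0 * R] only at the origin. *)
Definition linear_graph G := graph_subspace G /\ forall r, G (0, r) -> r = 0.

Definition graph_dom G x := exists r, G (x, r).

Definition graph_adjoin G x0 r0 : set (X * R) :=
  [set (p.1 + t *: x0, p.2 + t * r0) | p in G & t in [set: R]].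

Lemma linear_graph_functional G x r r' :
  linear_graph G -> G (x, r) -> G (x, r') -> r = r'.
Proof.
move=> [[_ GD GZ] G0] Gr Gr'.
have := GD _ _ Gr (GZ (-1) _ Gr'); rewrite /= scaleN1r mulN1r subrr.
by move=> /G0/eqP; rewrite subr_eq0 => /eqP.
Qed.

Lemma graph_adjoin_subset G x0 r0 : G `<=` graph_adjoin G x0 r0.
Proof.
by move=> p Gp; exists p => //; exists 0 => //; rewrite scale0r mul0r !addr0; case: p Gp.
Qed.

Lemma graph_adjoin_point G x0 r0 : G (0, 0) -> graph_adjoin G x0 r0 (x0, r0).
Proof.
by move=> G0; exists (0, 0) => //; exists 1 => //; rewrite scale1r mul1r !add0r.
Qed.

Lemma linear_graph_adjoin G x0 r0 :
  linear_graph G -> ~ graph_dom G x0 -> linear_graph (graph_adjoin G x0 r0).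
Proof.
move=> [[G0 GD GZ] Gf] x0G; split; first split.
- exact: graph_adjoin_subset.
- move=> _ _ [p Gp [t _ <-]] [q Gq [u _ <-]] /=.
  exists (p.1 + q.1, p.2 + q.2); first exact: GD.
  by exists (t + u) => //; rewrite scalerDl mulrDl; congr pair; rewrite addrACA.
- move=> k _ [p Gp [t _ <-]] /=; exists (k *: p.1, k * p.2); first exact: GZ.
  by exists (k * t) => //; rewrite scalerDr scalerA mulrDr mulrA.
- move=> r [p Gp [t _ [e1 e2]]].
  have [t0|t0] := eqVneq t 0.
    by move: e1 e2 Gp; rewrite t0 scale0r mul0r !addr0; case: p => /= ? ? -> -> /Gf.
  (* otherwise [x0 = - p.1 / t] would lie in the domain of [G] *)
  case: x0G; exists (- t^-1 * p.2).
  have -> : x0 = - t^-1 *: p.1.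
    rewrite -[p.1](addrK (t *: x0)) e1 add0r scaleNr scalerN scalerA.
    by rewrite mulVf ?scale1r ?opprK.
  exact: GZ.
Qed.

Lemma linear_graph_bigcup (F : set (set (X * R))) :
  F !=set0 -> F `<=` linear_graph -> total_on F subset ->
  linear_graph (\bigcup_(G in F) G).
Proof.
move=> [G1 FG1] Flin Ftot; split; first split.
- by exists G1 => //; case: (Flin _ FG1) => -[].
- move=> p q [G FG Gp] [G' FG' G'q].
  have [GG'|G'G] := Ftot _ _ FG FG'.
    by exists G' => //; case: (Flin _ FG') => -[_ + _] _; apply; first exact: GG'.
  by exists G => //; case: (Flin _ FG) => -[_ + _] _; apply => //; exact: G'G.
- by move=> k p [G FG Gp]; exists G => //; case: (Flin _ FG) => -[_ _ +] _; apply.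
- by move=> r [G FG]; case: (Flin _ FG) => _; apply.
Qed.

Lemma linear_graph_maximal G0 : linear_graph G0 ->
  exists G, [/\ linear_graph G, G0 `<=` G & forall x, graph_dom G x].
Proof.
move=> G0lin; have [[G00 _ _] _] := G0lin.
(* [set0] is admitted so that the union of the empty chain lies in [P]. *)
pose P := [set G | G = set0 \/ linear_graph G /\ G0 `<=` G].
have [G [PG Gmax]] : exists G, P G /\ forall G', G `<` G' -> ~ P G'.
  apply: Zorn_bigcup => F FP Ftot.
  have [[G [FG [p Gp]]]|F0] := pselect (exists G, F G /\ G !=set0); last first.
    left; apply/seteqP; split=> // p [G FG Gp].
    by apply: F0; exists G; split=> //; exists p.
  right; rewrite (_ : \bigcup_(G in F) G = \bigcup_(G in F `&` [set G | G !=set0]) G).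
    split; last first.
      case: (FP _ FG) => [Gnil|[_ G0G] q /G0G Gq]; first by rewrite Gnil in Gp.
      by exists G => //; split=> //; exists p.
    apply: linear_graph_bigcup; first by exists G; split=> //; exists p.
      by move=> G' [/FP [-> [? []]|[]]].
    by move=> G1 G2 [F1 _] [F2 _]; apply: Ftot.
  apply/seteqP; split=> q [G' FG' G'q]; exists G' => //; last by case: FG'.
  by split=> //; exists q.
have [G0eq|[Glin G0G]] := PG.
  exfalso; apply: (Gmax G0); last by right; split.
  by rewrite G0eq; split=> [//|/(_ (0, 0) G00)].
exists G; split=> // x; apply: contrapT => xG.
apply: (Gmax (graph_adjoin G x 0)).
  split; first exact: graph_adjoin_subset.
  by move=> sub; apply: xG; exists 0; apply/sub/graph_adjoin_point; case: Glin => -[].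
right; split; first exact: linear_graph_adjoin.
exact: subset_trans G0G (@graph_adjoin_subset _ _ _).
Qed.

Lemma linear_graph_extend G0 : linear_graph G0 ->
  exists2 f, linear_functional f & forall p, G0 p -> f p.1 = p.2.
Proof.
move=> /linear_graph_maximal[G [Glin G0G Gdom]]; have [[_ GD GZ] _] := Glin.
pose f x := xget 0 (fun r => G (x, r)).
have Gf x : G (x, f x) := @xgetPex _ 0 (fun r => G (x, r)) (Gdom x).
exists f; first split.
- by move=> x y; apply: (linear_graph_functional Glin (Gf _)); apply: GD (Gf x) (Gf y).
- by move=> k x; apply: (linear_graph_functional Glin (Gf _)); apply: GZ (Gf x).
- by move=> [x r] /G0G Gxr; apply: (linear_graph_functional Glin (Gf _)).
Qed.

Lemma separating_functional (V : set X) x0 : subspace_X V -> ~ V x0 ->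
  exists2 g, linear_functional g & g x0 = 1 /\ forall w, V w -> g w = 0.
Proof.
move=> [V0 VD VZ] Vx0.
pose G : set (X * R) := [set p | V p.1 /\ p.2 = 0].
have Glin : linear_graph G.
  split=> [|r [] //]; split=> //.
  - by move=> p q [? ->] [? ->]; split; [exact: VD | rewrite addr0].
  - by move=> k p [? ->]; split; [exact: VZ | rewrite mulr0].
have x0G : ~ graph_dom G x0 by move=> [r []].
have [g lg Gg] := linear_graph_extend (@linear_graph_adjoin G x0 1 Glin x0G).
exists g => //; split; first exact: (Gg (x0, 1)) (graph_adjoin_point _ _ _).
by move=> w Vw; apply: (Gg (w, 0)); apply: graph_adjoin_subset.
Qed.

Lemma span_seq_coordinates (s : seq X) :
  exists n (t : 'I_n -> X) (f : 'I_n -> X -> R),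
    (forall i, linear_functional (f i)) /\
    forall a, span_seq s a -> a = \sum_i f i a *: t i.
Proof.
elim: s => [|x s [n [t [f [lf ts]]]]].
  exists 0, (fun=> 0), (fun _ _ => 0); split=> [[] //|a /span_seq_nil ->].
  by rewrite big_ord0.
have [_ SD SZ] := span_seq_subspace s.
have [xs|xs] := pselect (span_seq s x).
  exists n, t, f; split=> // _ /span_seq_consP[k [w [sw ->]]].
  by apply: ts; apply: SD => //; apply: SZ.
have [g [gD gZ] [gx gs]] := separating_functional (span_seq_subspace s) xs.
(* new coordinate [g] along [x]; the old ones are read after projecting along [x] *)
pose pr a := a - g a *: x.
exists n.+1, (fun i => if unlift ord0 i is Some j then t j else x),
  (fun i => if unlift ord0 i is Some j then f j \o pr else g).
split=> [i|_ /span_seq_consP[k [w [sw ->]]]].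
  case: (unlift ord0 i) => [j|]; last by split.
  have [fD fZ] := lf j; split=> [a b|k a] /=; rewrite /pr.
    by rewrite -fD gD scalerDl opprD addrACA.
  by rewrite -fZ gZ scalerBr scalerA.
have gkw : g (k *: x + w) = k by rewrite gD gZ gx gs // mulr1 addr0.
rewrite big_ord_recl unlift_none gkw; congr (_ + _).
rewrite [w in LHS]ts //; apply: eq_bigr => i _.
by rewrite liftK /= /pr gkw addrAC subrr add0r.
Qed.

End LinearFunctionals.

Section FunctionalBounds.
Variables (R : realType) (X : lmodType R).
Implicit Types (A : set X) (f : X -> R).

Definition lin_bounded A :=
  forall f, linear_functional f -> exists M, forall a, A a -> `|f a| <= M.

Lemma tauc_open_functional_ball f c :
  linear_functional f -> tauc_open [set x | `|f x| < c].
Proof.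
move=> [fD fZ]; exists [set [set x | `|f x| < c]]; split; last by rewrite bigcup_set1.
move=> _ ->; split.
  move=> x y /= fx fy l /andP[l0 l1]; rewrite fD !fZ.
  apply: le_lt_trans (ler_normD _ _) _.
  have l1' : 0 <= 1 - l by rewrite subr_ge0.
  rewrite !normrM (ger0_norm l0) (ger0_norm l1').
  have [->|l_neq0] := eqVneq l 0; first by rewrite mul0r add0r subr0 mul1r.
  have : 0 < l by rewrite lt_def l_neq0.
  nra.
apply/seteqP; split=> [x [] //|x /= fx]; split=> // y.
have fy1 : 0 < `|f y| + 1 by rewrite ltr_pwDr.
exists ((c - `|f x|) / (`|f y| + 1)) => [|l /andP[l0 l1]] /=.
  by rewrite divr_gt0 // subr_gt0.
have : l * (`|f y| + 1) <= c - `|f x| by rewrite -ler_pdivlMr.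
rewrite fD fZ => lfy; apply: le_lt_trans (ler_normD _ _) _.
by rewrite normrM ger0_norm //; nra.
Qed.

Lemma tauc_bounded_lin_bounded A : tauc_bounded A -> lin_bounded A.
Proof.
move=> Abd f lf.
have U0 : tauc_nbhs0 [set x | `|f x| < 1].
  exists [set x | `|f x| < 1]; split; first exact: tauc_open_functional_ball.
  by split=> //=; rewrite linear_functional0 // normr0 ltr01.
have [s s0 As] := Abd _ U0.
have s1 : 0 < s + 1 by rewrite addr_gt0.
exists (s + 1) => a /(As (s + 1)); rewrite ltrDl ltr01 => /(_ isT) [u /= fu <-].
case: lf => _ ->; rewrite normrM gtr0_norm // -[leRHS]mulr1.
by rewrite ler_wpM2l ?ltW.
Qed.

Lemma tauc_compact_lin_bounded A : tauc_compact A -> lin_bounded A.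
Proof.
move=> Acomp f lf; pose ball n := [set x | `|f x| < n%:R].
have ballo U : range ball U -> tauc_open U.
  by move=> [n _ <-]; exact: tauc_open_functional_ball.
have Aball : A `<=` \bigcup_(U in range ball) U.
  move=> a _; pose n := (Num.truncn `|f a|).+1.
  by exists (ball n); [exists n | exact: truncnS_gt].
have [G [GF Gfin AG]] := Acomp _ ballo Aball.
pose idx U := xget 0%N (fun n => ball n = U).
have idxP U : G U -> ball (idx U) = U.
  by move=> /GF [n _ nU]; apply: (@xgetPex _ 0%N (fun n => ball n = U)); exists n.
have [B eB] := finite_fsetP.1 (finite_image idx Gfin).
exists (\max_(n <- B) n)%:R => a Aa; have [U GU Ua] := AG a Aa.
have idxB : idx U \in B by have : [set` B] (idx U) by rewrite -eB; exists U.
move: Ua; rewrite -(idxP U GU) /= => /ltW /le_trans; apply.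
by rewrite ler_nat (@leq_bigmax_seq _ _ xpredT (fun n => n) _ idxB).
Qed.

End FunctionalBounds.

Section UnboundedFunctional.
Variables (R : realType) (X : lmodType R) (A : set X).
Hypothesis A_nspan : forall s, ~ A `<=` span_seq s.

Definition pick_outside (s : seq X) := xget 0 [set x | A x /\ ~ span_seq s x].

Lemma pick_outsideP s : A (pick_outside s) /\ ~ span_seq s (pick_outside s).
Proof.
apply: (@xgetPex _ 0 [set x | A x /\ ~ span_seq s x]).
apply: contrapT => sA; apply: (A_nspan (s := s)) => x Ax.
by apply: contrapT => xs; apply: sA; exists x.
Qed.

(* [outside_seq n] lists points [a_(n-1), ..., a_0] of [A], each outside the
   span of the later ones; [stage_graph n] is the graph of [a_k |-> k] on their span. *)
Fixpoint outside_seq n : seq X :=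
  if n is k.+1 then pick_outside (outside_seq k) :: outside_seq k else [::].

Fixpoint stage_graph n : set (X * R) :=
  if n is k.+1 then graph_adjoin (stage_graph k) (pick_outside (outside_seq k)) k%:R
  else [set (0, 0)].

Lemma stage_graph_linear n :
  linear_graph (stage_graph n) /\
  graph_dom (stage_graph n) `<=` span_seq (outside_seq n).
Proof.
elim: n => [|n [Glin Gdom]] /=.
  split=> [|x [r [-> _]]]; last by case: (span_seq_subspace (X := X) [::]).
  split=> [|r [] //]; split=> // [p q -> ->|k p ->] /=.
    by rewrite !addr0.
  by rewrite scaler0 mulr0.
have [_ xs] := pick_outsideP (outside_seq n).
split; first by apply: linear_graph_adjoin => // /Gdom.
have [_ SD SZ] := span_seq_subspace (pick_outside (outside_seq n) :: outside_seq n).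
move=> _ [r [p Gp [t _ [<- _]]]]; apply: SD.
  by apply/span_seq_cons_subset/Gdom; exists p.2; case: p Gp.
by apply/SZ/span_seq_cons_head.
Qed.

Lemma stage_graph_subset n m : (n <= m)%N -> stage_graph n `<=` stage_graph m.
Proof.
elim: m => [|m IH]; first by rewrite leqn0 => /eqP ->.
rewrite leq_eqVlt ltnS => /predU1P[-> //|/IH nm].
exact: subset_trans nm (@graph_adjoin_subset _ _ _ _ _).
Qed.

Lemma lin_unbounded_outside_spans :
  exists2 f, linear_functional f & forall n : nat, exists2 a, A a & f a = n%:R.
Proof.
pose F := range stage_graph.
have Flin : linear_graph (\bigcup_(G in F) G).
  apply: linear_graph_bigcup; first by exists (stage_graph 0); exists 0.
    by move=> _ [n _ <-]; case: (stage_graph_linear n).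
  move=> _ _ [n _ <-] [m _ <-].
  by have [nm|/ltnW mn] := leqP n m; [left|right]; apply: stage_graph_subset.
have [f lf Ff] := linear_graph_extend Flin.
exists f => // n; exists (pick_outside (outside_seq n)); first exact: (pick_outsideP _).1.
apply: (Ff (_, n%:R)); exists (stage_graph n.+1); first by exists n.+1.
by apply: graph_adjoin_point; case: (stage_graph_linear n) => -[[]].
Qed.

End UnboundedFunctional.

Lemma lin_bounded_span (R : realType) (X : lmodType R) (A : set X) :
  lin_bounded A -> exists s, A `<=` span_seq s.
Proof.
move=> Abd; apply: contrapT => Aspan.
have [f lf fA] := lin_unbounded_outside_spans (fun s sA => Aspan (ex_intro _ s sA)).
have [M AM] := Abd f lf; have [a Aa fa] := fA (Num.truncn `|M|).+1.
have := AM a Aa; rewrite fa normr_nat.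
have := truncnS_gt `|M|; have := ler_norm M; lra.
Qed.

Section FiniteDimensionalImages.
Variables (R : realType) (X : lmodType R).

Definition tauc_continuous (T : topologicalType) (g : T -> X) :=
  forall U, tauc_open U -> open (g @^-1` U).

Lemma tauc_compact_image (T : ptopologicalType) (g : T -> X) K :
  compact K -> tauc_continuous g -> tauc_compact (g @` K).
Proof.
rewrite compact_cover => Kc gc F Fo gKF.
have [D DF KD] := Kc _ F (preimage g) (fun U FU => gc U (Fo U FU))
  (fun x Kx => gKF _ (ex_intro2 _ _ x Kx erefl)).
exists [set` D]; split; [by move=> U /DF; rewrite in_setE | exact: finite_fset |].
by move=> _ [x Kx <-]; have [U DU gxU] := KD x Kx; exists U.
Qed.

Lemma tauc_compact_closed_subset (A B : set X) :
  tauc_compact B -> tauc_closed A -> A `<=` B -> tauc_compact A.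
Proof.
move=> Bc Ac AB F Fo AF.
have FAo U : (F `|` [set ~` A]) U -> tauc_open U by move=> [/Fo|->].
have BFA : B `<=` \bigcup_(U in F `|` [set ~` A]) U.
  move=> x _; have [/AF [U FU Ux]|nAx] := pselect (A x).
    by exists U => //; left.
  by exists (~` A) => //; right.
have [G [GF Gfin BG]] := Bc _ FAo BFA.
exists (G `&` F); split; [by move=> U [] | exact: sub_finite_set Gfin |].
move=> x Ax; have [U GU Ux] := BG x (AB x Ax).
exists U => //; split=> //.
by case: (GF U GU) => // UA; rewrite UA in Ux; case: (Ux Ax).
Qed.

Lemma cor_radius (B : set X) n (t : 'I_n -> X) x : cor B x ->
  exists2 d : R, 0 < d & forall i e, `|e| <= d -> B (x + e *: t i).
Proof.
move=> [_ Bx].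
have /choice[d dP] i : exists d : R, 0 < d /\
    forall e, `|e| <= d -> B (x + e *: t i).
  have [d1 d1_gt0 B1] := Bx (t i); have [d2 d2_gt0 B2] := Bx (- t i).
  exists (Num.min d1 d2); split=> [|e]; first by rewrite lt_min d1_gt0.
  rewrite le_min => /andP[ed1 ed2]; have [e0|e0] := lerP 0 e.
    by apply: B1; rewrite e0 -(ger0_norm e0).
  rewrite -[e]opprK scaleNr -scalerN; apply: B2; rewrite oppr_ge0 ltW //=.
  by rewrite -(ltr0_norm e0).
exists (\big[Num.min/1]_i d i) => [|i e ed].
  apply: (big_ind (fun y => 0 < y)) => // [y z y0 z0|i _]; first by rewrite lt_min y0.
  by case: (dP i).
by case: (dP i) => _; apply; apply: le_trans ed (bigmin_le _ _ _).
Qed.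

Lemma convex_set_avg (B : set X) n (z : 'I_n.+1 -> X) : convex_set_X B ->
  (forall i, B (z i)) -> B (n.+1%:R^-1 *: \sum_i z i).
Proof.
elim: n z => [|n IH] z Bcvx Bz; first by rewrite big_ord1 invr1 scale1r.
have Bavg := IH (fun i => z (widen_ord (leqnSn n.+1) i)) Bcvx (fun i => Bz _).
have l01 : 0 <= (n.+1%:R / n.+2%:R : R) <= 1.
  by rewrite divr_ge0 ?ler0n //= ler_pdivrMr ?ltr0n // mul1r ler_nat.
have n2 : n.+2%:R != 0 :> R by rewrite pnatr_eq0.
have e1 : n.+1%:R / n.+2%:R * n.+1%:R^-1 = n.+2%:R^-1 :> R.
  by rewrite mulrAC mulfV ?pnatr_eq0 // mul1r.
have e2 : 1 - n.+1%:R / n.+2%:R = n.+2%:R^-1 :> R.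
  by apply: (mulIf n2); rewrite mulrBl mulVf // mul1r divfK // -natrB // subSnn.
rewrite big_ord_recr scalerDr.
by have := Bcvx _ _ Bavg (Bz ord_max) _ l01; rewrite scalerA e1 e2.
Qed.

Definition lincomb n (t : 'I_n -> X) (c : 'rV[R]_n) : X := \sum_i c ord0 i *: t i.

(* An open neighbourhood of [c] maps into [B]: [lincomb t y] is the average of
   the points [lincomb t c + n.+1 (y_i - c_i) t_i], which lie in [B] for [y] near [c]. *)
Lemma lincomb_open_preimage n (t : 'I_n.+1 -> X) (B : set X) :
  convex_set_X B -> cor B = B -> open (lincomb t @^-1` B).
Proof.
move=> Bcvx Bcor; rewrite openE => c /= Bc; apply/nbhs_ballP.
have corBc : cor B (lincomb t c) by rewrite Bcor.
have [d d_gt0 Bd] := cor_radius t corBc.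
have n_gt0 : 0 < n.+1%:R :> R by rewrite ltr0n.
exists (d / n.+1%:R) => [|y cy /=]; first by rewrite /= divr_gt0.
pose e i := n.+1%:R * (y ord0 i - c ord0 i).
have Bz i : B (lincomb t c + e i *: t i).
  apply: Bd; rewrite /e normrM ger0_norm ?ler0n // distrC -ler_pdivlMl // mulrC.
  by apply: ltW; case: cy => _ /(_ ord0 i); rewrite -ball_normE.
have := convex_set_avg Bcvx Bz.
rewrite big_split /= sumr_const card_ord scalerDr -scalerMnr scalerMnl -mulr_natr.
rewrite mulVf ?gt_eqF // scale1r scaler_sumr /lincomb -big_split /=.
congr B; apply: eq_bigr => i _.
by rewrite scalerA /e mulrA mulVf ?gt_eqF // mul1r -scalerDl addrC subrK.
Qed.

Lemma lincomb_tauc_continuous n (t : 'I_n -> X) : tauc_continuous (lincomb t).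
Proof.
move=> _ [F [FB ->]]; rewrite preimage_bigcup; apply: bigcup_open => B /FB[Bcvx Bcor].
case: n t => [t|n t]; last exact: lincomb_open_preimage.
rewrite (_ : lincomb t = fun=> 0); last by apply/funext => c; rewrite /lincomb big_ord0.
by rewrite preimage_cst; case: ifP => _; [exact: openT | exact: open0].
Qed.

End FiniteDimensionalImages.

Unset Implicit Arguments.
Theorem theorem3p16 (R : realType) (X : lmodType R) :
  (forall A : set X, tauc_closed A -> tauc_bounded A -> tauc_compact A) /\
  (forall A : set X, tauc_compact A ->
     exists V : set X, fin_dim_subspace V /\ A `<=` V).
Proof.
split=> [A Acl Abd | A Acomp]; last first.
  have [s As] := lin_bounded_span (tauc_compact_lin_bounded Acomp).
  by exists (span_seq s); split=> //; split; [exact: span_seq_subspace | exists s].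
have Alin := tauc_bounded_lin_bounded Abd.
have [s As] := lin_bounded_span Alin.
have [n [t [f [lf ts]]]] := span_seq_coordinates s.
have /choice[M AM] i : exists M, forall a, A a -> `|f i a| <= M := Alin _ (lf i).
pose K := [set c : 'rV[R]_n | forall i, `[- M i, M i]%classic (c ord0 i)].
have Kc : compact K.
  apply: (@rV_compact _ _ (fun i => `[- M i, M i]%classic)) => i.
  exact: segment_compact.
have Kimg := tauc_compact_image Kc (lincomb_tauc_continuous (t := t)).
apply: (tauc_compact_closed_subset Kimg Acl).
move=> a Aa; exists (\row_i f i a).
  by move=> i; rewrite mxE /= in_itv /= -ler_norml AM.
by rewrite [RHS](ts a (As a Aa)); apply: eq_bigr => i _; rewrite mxE.
Qed.
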